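(* Let $\mathbb{F}$ be a field and let $(\mathscr{P},\mathscr{B},\mathrm{I})$ be the affine plane over $\mathbb{F}$: $\mathscr{P}=\mathbb{F}\times\mathbb{F}$; the lines are the vertical lines $L_b$ ($b\in\mathbb{F}$) and the non-vertical lines $L_{m,b}$ ($m,b\in\mathbb{F}$); and the incidence is given by $(b,y)\ \mathrm{I}\ L_b$ for all $y\in\mathbb{F}$ and $(x,mx+b)\ \mathrm{I}\ L_{m,b}$ for all $x\in\mathbb{F}$. Let $\Gamma$ be its incidence graph, take the gain group to be $(\mathbb{F},+)$ acting on $\Lambda=\mathbb{F}$ by addition, and define the gain function $\varphi$ on edges by $$\varphi(e)=\begin{cases}-by, & \text{if } e=\{L_b,(b,y)\},\\ xb, & \text{if } e=\{L_{m,b},(x,mx+b)\}.\end{cases}$$ Then $\mathfrak{M}(\Gamma,\varphi)$ is a generalized quadrangle.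
   Context: An incidence structure is a triple $(\mathscr{P},\mathscr{B},\mathrm{I})$ where $\mathscr{P}$ (points) and $\mathscr{B}$ (lines) are nonempty disjoint sets and $\mathrm{I}\subseteq\mathscr{P}\times\mathscr{B}$ is a nonempty incidence relation; write $p\ \mathrm{I}\ b$ or $b\ \mathrm{I}\ p$ when $(p,b)\in\mathrm{I}$. Its incidence graph $\Gamma$ is the bipartite graph with vertex set $\mathscr{P}\cup\mathscr{B}$ and an edge $bp$ for each incident pair $b\ \mathrm{I}\ p$; every edge is oriented from its line to its point. A gain function with gain group $G$ assigns to each edge $e$ an element $\varphi(e)\in G$ (extended to a homomorphism on the free group on the edges, so $\varphi(e^{-1})=\varphi(e)^{-1}$). The gain group acts on a nonempty set $\Lambda$ on the left. Construction $\mathfrak{M}(\Gamma,\varphi)$: the incidence structure $(\mathscr{P}',\mathscr{B}',\mathrm{I}')$ whose points are the formal symbols $x_p$ ($p\in\mathscr{P}$) and $y_{b,\lambda}$ ($b\in\mathscr{B},\lambda\in\Lambda$), whose lines are the formal symbols $z_{p,\lambda}$ ($p\in\mathscr{P},\lambda\in\Lambda$), and whose incidences are exactly: $x_p\ \mathrm{I}'\ z_{p,\lambda}$ for all $\lambda$, and $y_{b,\lambda}\ \mathrm{I}'\ z_{p,\mu}$ whenever $b\ \mathrm{I}\ p$ and $\mu=\varphi(bp)\cdot\lambda$. A $k$-chain is a sequence $(u_0,\dots,u_k)$ of elements of $\mathscr{P}\cup\mathscr{B}$ with $u_i$ incident with $u_{i-1}$ for $1\le i\le k$; the distance $d(u,v)$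 is the least $k$ such that a $k$-chain from $u$ to $v$ exists ($\infty$ if none). A generalized quadrangle is an incidence structure such that (1) $d(u,v)\le 4$ for all elements $u,v$, and (2) whenever $d(u,v)=k<4$ there is a unique $k$-chain from $u$ to $v$. *)

From mathcomp Require Import all_boot all_order all_algebra.
Set Implicit Arguments. Unset Strict Implicit. Unset Printing Implicit Defensive.
Import GRing.Theory.
Local Open Scope ring_scope.

Definition elt_inc (P B : Type) (I : P -> B -> Prop) (u v : P + B) : Prop :=
  match u, v with
  | inl p, inr b => I p b
  | inr b, inl p => I p b
  | _, _ => False
  end.

Fixpoint chain_from (E : Type) (R : E -> E -> Prop) (u : E) (s : list E) : Prop :=
  match s with
  | nil => True
  | x :: s' => R u x /\ chain_from R x s'
  end.

Definition is_k_chain (P B : Type) (I : P -> B -> Prop) (k : nat) (u v : P + B)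
  (s : list (P + B)) : Prop :=
  size s = k /\ last u s = v /\ chain_from (elt_inc I) u s.

Definition dist_is (P B : Type) (I : P -> B -> Prop) (u v : P + B) (k : nat) : Prop :=
  (exists s, is_k_chain I k u v s) /\
  (forall j s, (j < k)%N -> ~ is_k_chain I j u v s).

Definition is_incidence_structure (P B : Type) (I : P -> B -> Prop) : Prop :=
  inhabited P /\ inhabited B /\ exists p b, I p b.

Definition generalized_quadrangle (P B : Type) (I : P -> B -> Prop) : Prop :=
  is_incidence_structure I /\
  (forall u v : P + B, exists k, (k <= 4)%N /\ exists s, is_k_chain I k u v s) /\
  (forall (u v : P + B) (k : nat), (k < 4)%N -> dist_is I u v k ->
     forall s1 s2, is_k_chain I k u v s1 -> is_k_chain I k u v s2 -> s1 = s2).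

(** The construction M(Gamma, phi).  [phi b p] is the gain of the edge bp
    (oriented from line b to point p); [act] is the left action of the gain
    group G on Lambda.
    Points: [inl p] = x_p, [inr (b, l)] = y_{b,l}; lines: [(p, l)] = z_{p,l}. *)
Definition M_inc (P B G Lam : Type) (I : P -> B -> Prop) (act : G -> Lam -> Lam)
  (phi : B -> P -> G) (pt : P + (B * Lam)) (ln : P * Lam) : Prop :=
  match pt with
  | inl p => ln.1 = p
  | inr (b, l) => I ln.1 b /\ ln.2 = act (phi b ln.1) l
  end.

Inductive aff_line (F : Type) : Type :=
  | Vert of F
  | NonVert of F & F.

Definition aff_inc (F : fieldType) (p : F * F) (L : aff_line F) : Prop :=
  match L with
  | Vert b => p.1 = b
  | NonVert m b => p.2 = m * p.1 + b
  end.

(** Gain function: phi({L_b,(b,y)}) = -b y, phi({L_{m,b},(x,mx+b)}) = x b.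
    (Only its values on incident pairs are relevant.) *)
Definition aff_gain (F : fieldType) (L : aff_line F) (p : F * F) : F :=
  match L with
  | Vert b => - (b * p.2)
  | NonVert m b => p.1 * b
  end.

Definition add_act (F : fieldType) (a l : F) : F := a + l.

From mathcomp Require Import all_boot all_order all_algebra.
From mathcomp Require Import ring.
From Stdlib Require Import Classical.

(** The argument works for any gain graph over a linear space (any two
    points lie on exactly one line) whose gains lie in an abelian group
    acting on itself by translation.  Then
    M(Γ,φ) is again partial linear, and a triangle of M(Γ,φ) projects to a
    triangle of Γ with zero cycle gain.  If moreover, for every antiflag
    (q, L), the gains of the paths L, r, qr, q with r on L take every value,
    then each point of M(Γ,φ) is at distance at most 3 from each line.  In a
    partial linear, triangle-free structure chains of length < 4 realising
    the distance are unique, so these properties make a generalized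
    quadrangle.

    In the affine plane the gain difference between two points r, q along
    any line through both is det(r, q).  So the cycle gain of a triangle is
    twice its signed area, which vanishes only for collinear points, and for
    an antiflag (q, L) the path gain is a non-constant affine function of
    r on L. *)

Set Implicit Arguments.
Unset Strict Implicit.
Unset Printing Implicit Defensive.
Import GRing.Theory.

Section IncidenceStructure.
Variables (P B : Type) (I : P -> B -> Prop).
Local Notation R := (elt_inc I).

Definition partial_linear : Prop :=
  forall p1 p2 b1 b2, p1 <> p2 -> I p1 b1 -> I p2 b1 -> I p1 b2 -> I p2 b2 -> b1 = b2.

Definition triangle_free : Prop :=
  forall p1 p2 p3 b1 b2 b3, I p1 b3 -> I p2 b3 -> I p2 b1 -> I p3 b1 ->
    I p1 b2 -> I p3 b2 -> I p1 b1 \/ I p2 b2 \/ I p3 b3.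

Definition point_line_dist_le3 : Prop :=
  forall p b, exists p' b', [/\ I p b', I p' b' & I p' b].

Lemma elt_incC x y : R x y -> R y x.
Proof. by case: x => x; case: y => y. Qed.

Lemma elt_inc_common_neighbour : partial_linear ->
  forall x y a b, x <> y -> R x a -> R y a -> R x b -> R y b -> a = b.
Proof.
move=> hPL [x|x] [y|y] [a|a] [b|b] //= nxy xa ya xb yb.
  by congr inr; apply: (hPL x y) => // exy; apply: nxy; rewrite exy.
apply: NNPP => nab; apply: nxy; congr inr.
by apply: (hPL a b) => // eab; apply: nab; rewrite eab.
Qed.

Lemma elt_inc_hexagon : triangle_free -> forall x0 x1 x2 x3 x4 x5,
  R x0 x1 -> R x1 x2 -> R x2 x3 -> R x3 x4 -> R x4 x5 -> R x5 x0 ->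
  R x0 x3 \/ R x1 x4 \/ R x2 x5.
Proof.
move=> hTF [x0|x0] [x1|x1] // [x2|x2] // [x3|x3] // [x4|x4] // [x5|x5] //=
  h01 h12 h23 h34 h45 h50.
- by have := hTF x0 x2 x4 x3 x5 x1 h01 h12 h23 h34 h50 h45; tauto.
- by have := hTF x1 x3 x5 x4 x0 x2 h12 h23 h34 h45 h01 h50; tauto.
Qed.

Section Uniqueness.
Hypotheses (hPL : partial_linear) (hTF : triangle_free).

Lemma two_chain_unique u v a1 a2 : u <> v ->
  R u a1 -> R a1 v -> R u a2 -> R a2 v -> a1 = a2.
Proof.
move=> nuv ua1 a1v ua2 a2v; apply: NNPP => na12; apply: nuv.
exact: (elt_inc_common_neighbour hPL na12 (elt_incC ua1) (elt_incC ua2) a1v a2v).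
Qed.

Lemma three_chain_unique u v a1 b1 a2 b2 : ~ R u v ->
  R u a1 -> R a1 b1 -> R b1 v -> R u a2 -> R a2 b2 -> R b2 v -> a1 = a2 /\ b1 = b2.
Proof.
move=> nuv ua1 a1b1 b1v ua2 a2b2 b2v.
have nua1v : a1 <> v by move=> e; apply: nuv; rewrite -e.
have nub1 : u <> b1 by move=> e; apply: nuv; rewrite e.
have [//|[a1b2|b1a2]] :=
  elt_inc_hexagon hTF ua1 a1b1 b1v (elt_incC b2v) (elt_incC a2b2) (elt_incC ua2).
- have eb := two_chain_unique nua1v a1b1 b1v a1b2 b2v; subst b2.
  by split=> //; apply: two_chain_unique nub1 ua1 a1b1 ua2 a2b2.
- have ea := two_chain_unique nub1 ua1 a1b1 ua2 (elt_incC b1a2); subst a2.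
  by split=> //; apply: two_chain_unique nua1v a1b1 b1v a2b2 b2v.
Qed.

Lemma k_chain_unique u v k : (k < 4)%N -> dist_is I u v k ->
  forall s1 s2, is_k_chain I k u v s1 -> is_k_chain I k u v s2 -> s1 = s2.
Proof.
move=> hk [_ hmin] s1 s2 [sz1 [l1 c1]] [sz2 [l2 c2]]; subst k.
case: s1 hk hmin l1 c1 sz2 => [|a1 [|b1 [|c1' [|? ?]]]] //= _ hmin l1 c1;
  case: s2 l2 c2 => [|a2 [|b2 [|c2' [|? ?]]]] //= l2 c2 _.
- by rewrite l1 l2.
- subst b1 b2; case: c1 c2 => [ua1 [a1v _]] [ua2 [a2v _]].
  have nuv : u <> v by move=> e; apply: (hmin 0%N [::]).
  by rewrite (two_chain_unique nuv ua1 a1v ua2 a2v).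
- subst c1' c2'; case: c1 c2 => [ua1 [a1b1 [b1v _]]] [ua2 [a2b2 [b2v _]]].
  have nuv : ~ R u v by move=> e; apply: (hmin 1%N [:: v]).
  by have [-> ->] := three_chain_unique nuv ua1 a1b1 b1v ua2 a2b2 b2v.
Qed.

End Uniqueness.

Lemma generalized_quadrangle_of_triangle_free :
  is_incidence_structure I -> partial_linear -> triangle_free ->
  point_line_dist_le3 -> generalized_quadrangle I.
Proof.
move=> hIS hPL hTF h3; split=> //; split; last exact: k_chain_unique.
have [[p0] [[b0] _]] := hIS.
have on_line p : exists b, I p b by have [? [b []]] := h3 p b0; exists b.
have has_point b : exists p, I p b by have [p [? []]] := h3 p0 b; exists p.
case=> [p|b] [q|c].
- have [c qc] := on_line q; have [p' [b' [pb' p'b' p'c]]] := h3 p c.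
  by exists 4%N; split=> //; exists [:: inr b'; inl p'; inr c; inl q].
- have [p' [b' [pb' p'b' p'c]]] := h3 p c.
  by exists 3%N; split=> //; exists [:: inr b'; inl p'; inr c].
- have [p' [b' [qb' p'b' p'b]]] := h3 q b.
  by exists 3%N; split=> //; exists [:: inl p'; inr b'; inl q].
- have [p pb] := has_point b; have [p' [b' [pb' p'b' p'c]]] := h3 p c.
  by exists 4%N; split=> //; exists [:: inl p; inr b'; inl p'; inr c].
Qed.

End IncidenceStructure.

Lemma addr_balance (G : zmodType) (a b x y : G) : (a + x = b + y -> a - b = y - x)%R.
Proof. by move=> e; apply/eqP; rewrite subr_eq addrAC [(y + b)%R]addrC -e addrK. Qed.

Section GainConstruction.
Variables (P B : Type) (I : P -> B -> Prop) (G : zmodType) (phi : B -> P -> G).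
Local Open Scope ring_scope.
Local Notation MI := (M_inc I (fun g l : G => g + l) phi).

Hypothesis I_partial_linear : partial_linear I.
Hypothesis I_join : forall p q, exists L, I p L /\ I q L.
Hypothesis gain_triangle : forall L1 L2 L3 q1 q2 q3,
  L1 <> L2 -> L2 <> L3 -> L1 <> L3 -> q1 <> q2 -> q2 <> q3 -> q1 <> q3 ->
  I q3 L1 -> I q3 L2 -> I q1 L2 -> I q1 L3 -> I q2 L1 -> I q2 L3 ->
  phi L1 q3 - phi L2 q3 + (phi L2 q1 - phi L3 q1) + (phi L3 q2 - phi L1 q2) != 0.
Hypothesis gain_antiflag : forall q L, ~ I q L -> forall g, exists r L',
  [/\ I r L, I r L', I q L' & phi L r - phi L' r + phi L' q = g].

Lemma M_partial_linear : partial_linear MI.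
Proof.
move=> [p|[L l]] [p'|[L' l']] [q1 u1] [q2 u2] /= ne.
- by move=> e1 e2 _ _; case: ne; rewrite -e1 -e2.
- by move=> -> [_ ->] -> [_ ->].
- by move=> [_ ->] -> [_ ->] ->.
move=> [q1L ->] [q1L' e1] [q2L ->] [q2L' e2].
have [->|nq] := classic (q1 = q2); first by [].
have eL := I_partial_linear nq q1L q2L q1L' q2L'; subst L'.
by case: ne; congr (inr (_, _)); apply: (addrI (phi L q1)).
Qed.

Lemma M_triangle_free_x x a2 a3 m1 m2 m3 :
  MI (inl x) m3 -> MI a2 m3 -> MI a2 m1 -> MI a3 m1 -> MI (inl x) m2 -> MI a3 m2 ->
  MI (inl x) m1 \/ MI a2 m2 \/ MI a3 m3.
Proof.
case: m1 m2 m3 => [q1 u1] [q2 u2] [q3 u3] /= ->.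
have [->|nq] := classic (q1 = x); first by left.
case: a2 a3 => [y|[L2 l2]] [z|[L3 l3]] /=.
- by move=> <- /nq.
- by move=> <- /nq.
- by move=> _ _ e1 -> e2; case: nq; rewrite e1 e2.
move=> [xL2 _] [q1L2 e12] [q1L3 e13] -> [xL3 e23].
have eL := I_partial_linear nq q1L2 xL2 q1L3 xL3; subst L3.
have el : l2 = l3 by apply: (addrI (phi L2 q1)); rewrite -e12 -e13.
by subst l3; right; left.
Qed.

Lemma M_triangle_free_y L1 l1 L2 l2 L3 l3 m1 m2 m3 :
  MI (inr (L1, l1)) m3 -> MI (inr (L2, l2)) m3 -> MI (inr (L2, l2)) m1 ->
  MI (inr (L3, l3)) m1 -> MI (inr (L1, l1)) m2 -> MI (inr (L3, l3)) m2 ->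
  MI (inr (L1, l1)) m1 \/ MI (inr (L2, l2)) m2 \/ MI (inr (L3, l3)) m3.
Proof.
case: m1 m2 m3 => [q1 u1] [q2 u2] [q3 u3] /=.
move=> [q3L1 e31] [q3L2 e32] [q1L2 e12] [q1L3 e13] [q2L1 e21] [q2L3 e23].
have [eL|n12] := classic (L1 = L2).
  subst L2; have el : l1 = l2 by apply: (addrI (phi L1 q3)); rewrite -e31 -e32.
  by subst l2; left.
have [eL|n23] := classic (L2 = L3).
  subst L3; have el : l2 = l3 by apply: (addrI (phi L2 q1)); rewrite -e12 -e13.
  by subst l3; right; left.
have [eL|n13] := classic (L1 = L3).
  subst L3; have el : l1 = l3 by apply: (addrI (phi L1 q2)); rewrite -e21 -e23.
  by subst l3; right; right.
have [eq|nq12] := classic (q1 = q2).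
  by subst q2; left; split=> //; rewrite e13 -e23 e21.
have [eq|nq23] := classic (q2 = q3).
  by subst q3; right; left; split=> //; rewrite e21 -e31 e32.
have [eq|nq13] := classic (q1 = q3).
  by subst q3; right; right; split=> //; rewrite e32 -e12 e13.
have := gain_triangle n12 n23 n13 nq12 nq23 nq13 q3L1 q3L2 q1L2 q1L3 q2L1 q2L3.
rewrite (addr_balance (etrans (esym e31) e32)) (addr_balance (etrans (esym e12) e13)).
rewrite (addr_balance (etrans (esym e23) e21)).
by rewrite [l2 - l1 + _]addrC !subrKA subrr eqxx.
Qed.

Lemma M_triangle_free : triangle_free MI.
Proof.
move=> a1 a2 a3 m1 m2 m3 h13 h23 h21 h31 h12 h32.
case: a1 h13 h12 => [x|[L1 l1]] h13 h12; first exact: M_triangle_free_x.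
case: a2 h23 h21 => [x|[L2 l2]] h23 h21.
  by have := M_triangle_free_x h21 h31 h32 h12 h23 h13; tauto.
case: a3 h31 h32 => [x|[L3 l3]] h31 h32.
  by have := M_triangle_free_x h32 h12 h13 h23 h31 h21; tauto.
exact: M_triangle_free_y.
Qed.

Lemma M_point_line_dist_le3 : point_line_dist_le3 MI.
Proof.
move=> [p|[L l]] [q u].
  have [L [pL qL]] := I_join p q.
  by exists (inr (L, u - phi L q)), (p, phi L p + (u - phi L q)); rewrite /= subrKC.
have [qL|nqL] := classic (I q L); first by exists (inl q), (q, phi L q + l).
have [r [L' [rL rL' qL' e]]] := gain_antiflag nqL (u - l).
exists (inr (L', phi L r + l - phi L' r)), (r, phi L r + l); rewrite /= subrKC.
by rewrite addrAC addrA [phi L' q + _]addrC e subrK.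
Qed.

Theorem M_generalized_quadrangle : inhabited P -> generalized_quadrangle MI.
Proof.
move=> [p0]; apply: generalized_quadrangle_of_triangle_free.
- split; first exact: inhabits (inl p0).
  by split; [exact: inhabits (p0, 0) | exists (inl p0), (p0, 0)].
- exact: M_partial_linear.
- exact: M_triangle_free.
- exact: M_point_line_dist_le3.
Qed.

End GainConstruction.

Section AffinePlane.
Variable F : fieldType.
Local Open Scope ring_scope.
Implicit Types (p q r : F * F) (L : aff_line F).

Definition det2 p q : F := p.1 * q.2 - p.2 * q.1.

Definition area2 q1 q2 q3 : F := det2 q1 q2 + det2 q2 q3 + det2 q3 q1.

Lemma aff_gainB q r L :
  aff_inc q L -> aff_inc r L -> aff_gain L r - aff_gain L q = det2 r q.
Proof.
by case: q r L => [x y] [x' y'] [a|m b] /= => [-> ->|-> ->]; rewrite /det2 /=; ring.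
Qed.

Lemma aff_join p q : exists L, aff_inc p L /\ aff_inc q L.
Proof.
case: p q => [x y] [x' y'].
have [<-|nx] := eqVneq x x'; first by exists (Vert x).
have nx' : x' - x != 0 by rewrite subr_eq0 eq_sym.
exists (NonVert ((y' - y) / (x' - x)) (y - (y' - y) / (x' - x) * x)) => /=.
by split; field.
Qed.

Lemma aff_partial_linear : partial_linear (@aff_inc F).
Proof.
move=> [x1 y1] [x2 y2] [a|m b] [a'|m' b'] /= ne.
- by move=> <- _ <-.
- by move=> e1 e2 e3 e4; case: ne; rewrite e3 e4 e1 e2.
- by move=> e1 e2 e3 e4; case: ne; rewrite e1 e2 e3 e4.
move=> e1 e2 e3 e4.
have nx : x1 - x2 != 0 by rewrite subr_eq0; apply/eqP => ex; case: ne; rewrite e1 e2 ex.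
have : (m - m') * (x1 - x2) = 0.
  have -> : (m - m') * (x1 - x2) =
    (m * x1 + b - (m' * x1 + b')) - (m * x2 + b - (m' * x2 + b')) by ring.
  by rewrite -e1 -e2 -e3 -e4 !subrr.
move/eqP; rewrite mulf_eq0 (negbTE nx) orbF subr_eq0 => /eqP em; subst m'.
by congr NonVert; apply: (addrI (m * x1)); rewrite -e1 -e3.
Qed.

Lemma aff_inc_area2_eq0 q1 q2 q3 L : q1 <> q2 -> aff_inc q1 L -> aff_inc q2 L ->
  area2 q1 q2 q3 = 0 -> aff_inc q3 L.
Proof.
rewrite /area2 /det2; case: q1 q2 q3 L => [x1 y1] [x2 y2] [x3 y3] [a|m b] /= ne.
- move=> e1 e2; subst x1 x2.
  have ny : y2 - y1 != 0 by rewrite subr_eq0; apply/eqP => ey; case: ne; rewrite ey.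
  have -> : a * y2 - y1 * a + (a * y3 - y2 * x3) + (x3 * y1 - y3 * a) =
    (a - x3) * (y2 - y1) by ring.
  by move/eqP; rewrite mulf_eq0 (negbTE ny) orbF subr_eq0 => /eqP ->.
move=> e1 e2; rewrite e1 e2.
have nx : x2 - x1 != 0 by rewrite subr_eq0; apply/eqP => ex; case: ne; rewrite e1 e2 ex.
have -> : x1 * (m * x2 + b) - (m * x1 + b) * x2 + (x2 * y3 - (m * x2 + b) * x3)
    + (x3 * (m * x1 + b) - y3 * x1) = (x2 - x1) * (y3 - (m * x3 + b)) by ring.
by move/eqP; rewrite mulf_eq0 (negbTE nx) /= subr_eq0 => /eqP.
Qed.

Lemma aff_gain_triangle L1 L2 L3 q1 q2 q3 : L2 <> L3 -> q1 <> q2 -> q1 <> q3 ->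
  aff_inc q3 L1 -> aff_inc q3 L2 -> aff_inc q1 L2 -> aff_inc q1 L3 ->
  aff_inc q2 L1 -> aff_inc q2 L3 ->
  aff_gain L1 q3 - aff_gain L2 q3 + (aff_gain L2 q1 - aff_gain L3 q1)
    + (aff_gain L3 q2 - aff_gain L1 q2) != 0.
Proof.
move=> n23 nq12 nq13 q3L1 q3L2 q1L2 q1L3 q2L1 q2L3; apply/eqP => cycle0.
have q3L3 : aff_inc q3 L3.
  apply: (aff_inc_area2_eq0 nq12 q1L3 q2L3); rewrite /area2.
  rewrite -(aff_gainB q2L3 q1L3) -(aff_gainB q3L1 q2L1) -(aff_gainB q1L2 q3L2).
  by rewrite -oppr0 -cycle0; ring.
exact: n23 (aff_partial_linear nq13 q1L2 q3L2 q1L3 q3L3).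
Qed.

Lemma aff_antiflag_point q L g :
  ~ aff_inc q L -> exists2 r, aff_inc r L & aff_gain L r + det2 q r = g.
Proof.
rewrite /det2; case: q L => [x y] [a|m b] /= nqL.
  have nx : x - a != 0 by rewrite subr_eq0; apply/eqP.
  by exists (a, (g + y * a) / (x - a)) => //=; field.
have ny : y - (m * x + b) != 0 by rewrite subr_eq0; apply/eqP.
exists ((x * b - g) / (y - (m * x + b)), m * ((x * b - g) / (y - (m * x + b))) + b) => //=.
by field.
Qed.

Lemma aff_antiflag q L : ~ aff_inc q L -> forall g, exists r L',
  [/\ aff_inc r L, aff_inc r L', aff_inc q L'
    & aff_gain L r - aff_gain L' r + aff_gain L' q = g].
Proof.
move=> nqL g; have [r rL e] := aff_antiflag_point g nqL.
have [L' [rL' qL']] := aff_join r q; exists r, L'; split=> //.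
by rewrite -addrA [- _ + _]addrC (aff_gainB rL' qL').
Qed.

End AffinePlane.

Theorem theorem7 (F : fieldType) :
  generalized_quadrangle
    (M_inc (@aff_inc F) (@add_act F) (@aff_gain F)).
Proof.
apply: M_generalized_quadrangle.
- exact: aff_partial_linear.
- exact: aff_join.
- move=> L1 L2 L3 q1 q2 q3 _ n23 _ nq12 _ nq13.
  exact: aff_gain_triangle.
- exact: aff_antiflag.
- exact: inhabits (0 : F, 0 : F)%R.
Qed.
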